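(* Let $X$ and $Y$ be Hausdorff compact spaces, $\pi: X \to Y$ a fully closed continuous surjection, $y \in Y$, and $f$ a real-valued continuous function on $\pi^{-1}(y)$. Then there exists a continuous function $\tilde f: X \to \mathbb{R}$ extending $f$ such that the oscillation of $\tilde f$ on $\pi^{-1}(y')$ is $0$ (i.e. $\tilde f$ is constant on $\pi^{-1}(y')$) for every $y' \in Y$ with $y' \neq y$.
   Context: A continuous surjection $\pi: X \to Y$ between Hausdorff compacta is fully closed if for any two closed disjoint subsets $F_1, F_2 \subset X$ the set $\pi(F_1)\cap\pi(F_2)$ is finite. *)

From HB Require Import structures.
From mathcomp Require Import all_boot all_order all_algebra.
From mathcomp Require Import all_classical all_reals all_analysis.
Set Implicit Arguments. Unset Strict Implicit. Unset Printing Implicit Defensive.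
Import Order.TTheory GRing.Theory Num.Theory.
Local Open Scope classical_set_scope.

Definition fully_closed (X Y : topologicalType) (pi : X -> Y) : Prop :=
  forall F1 F2 : set X, closed F1 -> closed F2 -> F1 `&` F2 = set0 ->
    finite_set (pi @` F1 `&` pi @` F2).

From HB Require Import structures.
From mathcomp Require Import all_boot all_order all_algebra.
From mathcomp Require Import all_classical all_reals all_analysis.
Import Order.TTheory GRing.Theory Num.Theory.
Import numFieldNormedType.Exports.
Local Open Scope classical_set_scope.
Local Open Scope ring_scope.

(* Retopologize X: a set is open in the new space Z when it is open in X and,
   for every y' <> y, either contains or misses the fibre pi^-1 y'.  Full
   closedness makes Z normal.  Given W open in X and x in W with pi x = y, take
   a closed neighbourhood K of x inside W; only finitely many fibres meet both K
   and X \ W, so near x every fibre other than pi^-1 y that meets K lies inside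
   W.  So the points of W whose fibre is pi^-1 y or lies inside W form a
   Z-open set containing every saturated subset of W, and Z inherits normality
   from X.  The fibre pi^-1 y is closed in Z with the same subspace topology as
   in X, so Tietze's theorem in Z extends f; the extension is continuous on X,
   and constant on every other fibre because Z cannot separate two points of
   such a fibre. *)

Definition collapsed {X Y : topologicalType} (pi : X -> Y) (y : Y) : Type := X.

Definition saturated_off {X Y : Type} (pi : X -> Y) (y : Y) (A : set X) : Prop :=
  forall x1 x2, pi x1 = pi x2 -> pi x1 <> y -> A x1 -> A x2.

Definition saturated_core {X Y : Type} (pi : X -> Y) (y : Y) (W : set X) : set X :=
  [set x | W x /\ (pi x = y \/ pi @^-1` [set pi x] `<=` W)].

Section Collapse.
Context {X Y : topologicalType} { pi : X -> Y } {y : Y}.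

Lemma saturated_offC (A : set X) :
  saturated_off pi y A -> saturated_off pi y (~` A).
Proof.
by move=> sA x1 x2 e ne nA1 A2; apply/nA1/(sA x2 x1 (esym e)); rewrite -?e.
Qed.

Lemma saturated_off_core (W : set X) : saturated_off pi y (saturated_core pi y W).
Proof.
move=> x1 x2 e ne [_ [//|fib]]; split; first exact: fib.
by right => x' /= e'; apply: fib; rewrite /= e' e.
Qed.

Lemma saturated_off_sub_core (A W : set X) :
  saturated_off pi y A -> A `<=` W -> A `<=` saturated_core pi y W.
Proof.
move=> sA AW x Ax; split; first exact: AW.
have [pxy|pxy] := pselect (pi x = y); [by left|right] => x' /= e.
by apply: AW; apply: (sA x) => //; rewrite e.
Qed.

HB.instance Definition _ := Choice.on (collapsed pi y).

Definition collapsed_open : set_system (collapsed pi y) :=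
  [set A | open (A : set X) /\ saturated_off pi y A].

Lemma collapsed_openT : collapsed_open setT.
Proof. by split; [exact: openT|]. Qed.

Lemma collapsed_openI : setI_closed collapsed_open.
Proof.
move=> A B [oA sA] [oB sB]; split; first exact: openI.
by move=> x1 x2 e ne [A1 B1]; split; [exact: sA A1|exact: sB B1].
Qed.

Lemma collapsed_open_bigcup (I : Type) (A : I -> set (collapsed pi y)) :
  (forall i, collapsed_open (A i)) -> collapsed_open (\bigcup_i A i).
Proof.
move=> oA; split; first by apply: (@bigcup_open X) => i _; case: (oA i).
by move=> x1 x2 e ne [i _ Ax1]; exists i => //; exact: (proj2 (oA i) x1).
Qed.

HB.instance Definition _ := isOpenTopological.Build (collapsed pi y)
  collapsed_openT collapsed_openI collapsed_open_bigcup.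

Local Notation Z := (collapsed pi y).

Lemma open_collapsedE (A : set Z) :
  open A = (open (A : set X) /\ saturated_off pi y A).
Proof. by []. Qed.

Lemma closed_collapsed (A : set Z) :
  closed A -> closed (A : set X) /\ saturated_off pi y A.
Proof.
rewrite -openC open_collapsedE => -[oA sA]; split; first by rewrite -(@openC X).
by rewrite -[A]setCK; exact: saturated_offC.
Qed.

Lemma closed_collapsed_in_fiber {A : set X} :
  closed A -> A `<=` pi @^-1` [set y] -> closed (A : set Z).
Proof.
move=> cA Ay; rewrite -openC open_collapsedE; split; first by rewrite (@openC X).
by move=> x1 x2 e ne nA1 A2; apply: ne; rewrite e; exact: Ay.
Qed.

Lemma continuous_uncollapse (T : topologicalType) (g : Z -> T) :
  continuous g -> continuous (g : X -> T).
Proof. by move/continuousP => cg; apply/continuousP => B /cg []. Qed.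

Lemma collapsed_nbhs_fiber (x1 x2 : Z) (A : set Z) :
  pi x1 = pi x2 -> pi x1 <> y -> nbhs x2 A -> A x1.
Proof.
move=> e ne; rewrite nbhsE => -[U [[_ sU] Ux2] UA]; apply: UA.
by apply: (sU x2 x1 (esym e)); rewrite -?e.
Qed.

Lemma continuous_collapsed_fiber_const {T : topologicalType} {g : Z -> T} :
  hausdorff_space T -> continuous g ->
  forall x1 x2 : Z, pi x1 = pi x2 -> pi x1 <> y -> g x1 = g x2.
Proof.
move=> hT cg x1 x2 e ne; apply: hT => A B /nbhs_singleton Ag1 /cg gB.
by exists (g x1); split => //; exact: (@collapsed_nbhs_fiber x1 x2 (g @^-1` B) e ne gB).
Qed.

End Collapse.

Section CompactFullyClosed.
Context {X Y : topologicalType} (hX : hausdorff_space X) (hY : hausdorff_space Y)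
  (cX : compact [set: X]) { pi : X -> Y } (pi_cont : continuous pi) (y : Y).

Local Notation Z := (collapsed pi y).

Lemma closed_fiber : closed (pi @^-1` [set y]).
Proof.
apply: preimage_closed => [x _|]; first exact: pi_cont.
exact: accessible_closed_set1 (hausdorff_accessible hY) y.
Qed.

Lemma closed_image (A : set X) : closed A -> closed (pi @` A).
Proof.
move=> cA; apply: compact_closed hY _; apply: continuous_compact.
  exact: continuous_subspaceT.
exact: subclosed_compact cA cX _.
Qed.

Lemma nbhs_fibers_in {W : set X} {x : X} :
  open W -> pi @^-1` [set pi x] `<=` W ->
  nbhs x [set z | pi @^-1` [set pi z] `<=` W].
Proof.
move=> oW xW; pose V := ~` (pi @^-1` (pi @` ~` W)).
have oV : open V.
  rewrite openC; apply: preimage_closed => [z _|]; first exact: pi_cont.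
  exact/closed_image/open_closedC.
have Vx : V x by move=> [x' nWx' e]; apply: nWx'; apply: xW.
apply: filterS (open_nbhs_nbhs (conj oV Vx)) => z Vz x' e.
by apply/not_notP => nWx'; apply: Vz; exists x'.
Qed.

Lemma within_fiber_collapsed {T : topologicalType} {f : X -> T} :
  {within pi @^-1` [set y], continuous f} ->
  {within (pi @^-1` [set y] : set Z), continuous (f : Z -> T)}.
Proof.
move=> /subspace_continuousP cf; apply/subspace_continuousP => x Fx.
apply: cvg_trans (cf x Fx); apply: cvg_app => W.
rewrite [in X in X -> _]nbhsE => -[U [oU Ux] UW].
pose V := U `|` ~` pi @^-1` [set y].
have oV : open (V : set Z).
  split; first by apply: openU => //; rewrite openC; exact: closed_fiber.
  by move=> x1 x2 e ne _; right; rewrite /= -e.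
rewrite nbhs_filterE; apply: (@filterS Z (nbhs (x : Z)) _ V); first by move=> z [/UW|].
exact: (@open_nbhs_nbhs Z x V (conj oV (or_introl Ux))).
Qed.

Hypothesis pi_fc : fully_closed pi.

Lemma nbhs_saturated_core_fiber (W : set X) (x : X) :
  open W -> W x -> pi x = y -> nbhs x (saturated_core pi y W).
Proof.
move=> oW Wx pxy.
have [N Nx NW] := compact_regular hX cX (filterT : nbhs x setT)
  (open_nbhs_nbhs (conj oW Wx)).
have NWC0 : closure N `&` ~` W = set0 by apply/seteqP; split => // z [/NW].
pose P := (pi @` closure N `&` pi @` ~` W) `\` [set y].
have cP : closed P.
  apply: (accessible_finite_set_closed.1 (hausdorff_accessible hY)).
  by apply: finite_setD; exact: pi_fc (@closed_closure _ N) (open_closedC oW) NWC0.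
have nPx : nbhs x (~` (pi @^-1` P)).
  apply: open_nbhs_nbhs; split; last by move=> [_ /=]; rewrite pxy.
  by rewrite openC; apply: preimage_closed => // z _; exact: pi_cont.
apply: filterS (filterI Nx nPx) => z [Nz nPz].
have Wz : W z by apply/NW/subset_closure.
split => //; have [pzy|pzy] := pselect (pi z = y); [by left|right].
move=> x' e; apply/not_notP => nWx'; apply: nPz; split => //.
by split; [exists z => //; exact: subset_closure|exists x'].
Qed.

Lemma open_saturated_core (W : set X) :
  open W -> open (saturated_core pi y W : set Z).
Proof.
move=> oW; split; last exact: saturated_off_core.
rewrite openE => x [Wx [pxy|xW]]; first exact: nbhs_saturated_core_fiber.
rewrite /interior; apply: filterS (nbhs_fibers_in oW xW) => z zW.
by split; [exact: zW|right].
Qed.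

(* [R] is needed only by [normal_openP]. *)
Lemma collapsed_normal (R : realType) : normal_space Z.
Proof.
apply/(normal_openP (R := R)) => A B.
move=> /closed_collapsed[cA sA] /closed_collapsed[cB sB] AB.
have [U [V [oU oV AU BV UV]]] :=
  (normal_openP (R := R)).1 (compact_normal hX cX) A B cA cB AB.
exists (saturated_core pi y U), (saturated_core pi y V); split.
- exact: open_saturated_core.
- exact: open_saturated_core.
- exact: saturated_off_sub_core.
- exact: saturated_off_sub_core.
- by apply/seteqP; split => // z [[Uz _] [Vz _]]; rewrite -UV.
Qed.

End CompactFullyClosed.

Theorem lemma4p2 (R : realType) (X Y : topologicalType)
  (hX : hausdorff_space X) (hY : hausdorff_space Y)
  (cX : compact [set: X]) (cY : compact [set: Y])
  (pi : X -> Y) (pi_cont : continuous pi) (pi_surj : set_surj [set: X] [set: Y] pi)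
  (pi_fc : fully_closed pi)
  (y : Y) (f : X -> R) (f_cont : {within pi @^-1` [set y], continuous f}) :
  exists g : X -> R,
    continuous g /\
    (forall x, pi x = y -> g x = f x) /\
    (forall y' : Y, y' <> y ->
       forall x1 x2 : X, pi x1 = y' -> pi x2 = y' -> g x1 = g x2).
Proof.
have cF := closed_fiber hY pi_cont y.
have [M M0 fM] : exists2 M, 0 < M & forall x, pi x = y -> `|f x| <= M.
  have kF := subclosed_compact cF cX (@subsetT _ _).
  have [M M0 HM] := pinfty_ex_gt0 (compact_bounded (continuous_compact f_cont kF)).
  by exists M => // x Fx; apply: HM; exists x.
have [g [fg cg _]] := continuous_bounded_extension
  (collapsed_normal hX hY cX pi_cont y pi_fc R)
  (closed_collapsed_in_fiber cF (@subset_refl _ _))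
  M0 (within_fiber_collapsed hY pi_cont y f_cont) fM.
exists g; split; first exact: continuous_uncollapse.
split; first by move=> x Fx; rewrite fg // inE.
move=> y' y'y x1 x2 e1 e2.
apply: (continuous_collapsed_fiber_const (@Rhausdorff R) cg); last by rewrite e1.
by rewrite e1 e2.
Qed.
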